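(* Let $G=(V,E)$ be a connected undirected graph and $u:V\to\mathbb{R}$. (i) If $u\ge0$ and $\Delta_\infty u\le 0$ on $V$, then $u$ is constant. (ii) If $u\le 0$ and $\Delta_\infty u\ge0$ on $V$, then $u$ is constant.
   Context: For $x,y\in V$ write $x\sim y$ if $\{x,y\}\in E$. The discrete infinity Laplacian is $\Delta_\infty u(x)=\inf_{y\sim x}u(y)+\sup_{y\sim x}u(y)-2u(x)$. The graph is not assumed locally finite. *)

From HB Require Import structures.
From mathcomp Require Import all_boot all_order all_algebra.
From mathcomp Require Import all_classical all_reals ereal.
Set Implicit Arguments. Unset Strict Implicit. Unset Printing Implicit Defensive.
Import Order.TTheory GRing.Theory Num.Theory.
Local Open Scope classical_set_scope.
Local Open Scope ring_scope.

(* A (possibly infinite, not necessarily locally finite) simple undirected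
   graph on vertex type V is given by an adjacency relation adj,
   adj x y meaning {x,y} \in E, i.e. x ~ y. *)

Inductive reachable (V : Type) (adj : V -> V -> Prop) : V -> V -> Prop :=
  | reach_refl x : reachable adj x x
  | reach_step x y z : adj x y -> reachable adj y z -> reachable adj x z.

Definition graph_connected (V : Type) (adj : V -> V -> Prop) : Prop :=
  forall x y : V, reachable adj x y.

(* Discrete infinity Laplacian, with values in the extended reals since the
   graph need not be locally finite:
   Delta_oo u x = inf_{y ~ x} u y + sup_{y ~ x} u y - 2 u x. *)
Definition infty_laplacian (R : realType) (V : Type) (adj : V -> V -> Prop)
    (u : V -> R) (x : V) : \bar R :=
  (ereal_inf [set (u y)%:E | y in [set y | adj x y]]
   + ereal_sup [set (u y)%:E | y in [set y | adj x y]]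
   - (2 * u x)%:E)%E.

(** If [u >= 0] and [Delta_oo u <= 0], let [a ~ b] be an edge with
    [u b < u a].  Since [sup_{y ~ b} u y >= u a], the condition forces
    [inf_{y ~ b} u y <= 2 u b - u a], so up to any slack [b] has a neighbour
    lying below [u b] by almost [u a - u b].  Iterating with slacks halved at
    each step, every drop stays above half the initial gap, so [u] eventually
    becomes negative.  Hence [u] is constant along edges, and on the
    connected graph.  Part (ii) is the same argument for [-u], with the roles
    of [inf] and [sup] exchanged. *)
From HB Require Import structures.
From mathcomp Require Import all_boot all_order all_algebra.
From mathcomp Require Import all_classical all_reals ereal.
From mathcomp Require Import lra.
Import Order.TTheory GRing.Theory Num.Theory.
Local Open Scope classical_set_scope.
Local Open Scope ring_scope.

Lemma reachable_eq (V T : Type) (adj : V -> V -> Prop) (f : V -> T) x y :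
  (forall x y, adj x y -> f x = f y) -> reachable adj x y -> f x = f y.
Proof. by move=> f_adj; elim=> // a b c /f_adj -> _. Qed.

Section ErealBounds.
Context {R : realType} {i s : \bar R} {m a : R}.

Lemma lee_inf_addr_le0 :
  (i + s - m%:E <= 0)%E -> (a%:E <= s)%E -> (i <= (m - a)%:E)%E.
Proof.
by case: i => [i'| |]; case: s => [s'| |] //=; rewrite ?lee_fin ?leey ?leNye //; lra.
Qed.

Lemma lee_sup_addr_ge0 :
  (0 <= i + s - m%:E)%E -> (i <= a%:E)%E -> ((m - a)%:E <= s)%E.
Proof.
by case: i => [i'| |]; case: s => [s'| |] //=; rewrite ?lee_fin ?leey ?leNye //; lra.
Qed.

End ErealBounds.

Section LaplacianNeighbours.
Context {R : realType} {V : Type} {adj : V -> V -> Prop} {u : V -> R}.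

Let nbr_values x := [set (u y)%:E | y in [set y | adj x y]].

Lemma infty_laplacian_le0_nbr_lt x a e :
  (infty_laplacian adj u x <= 0)%E -> adj x a -> 0 < e ->
  exists2 z, adj x z & u z < 2 * u x - u a + e.
Proof.
move=> Lx xa e0.
have le_sup : ((u a)%:E <= ereal_sup (nbr_values x))%E.
  by apply: ereal_sup_ubound; exists a.
have : (ereal_inf (nbr_values x) < (2 * u x - u a + e)%:E)%E.
  apply: le_lt_trans (lee_inf_addr_le0 Lx le_sup) _.
  by rewrite lte_fin ltrDl.
by move=> /ereal_inf_lt [_ [z xz <-]]; rewrite lte_fin; exists z.
Qed.

Lemma infty_laplacian_ge0_nbr_gt x a e :
  (0 <= infty_laplacian adj u x)%E -> adj x a -> 0 < e ->
  exists2 z, adj x z & 2 * u x - u a - e < u z.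
Proof.
move=> Lx xa e0.
have ge_inf : (ereal_inf (nbr_values x) <= (u a)%:E)%E.
  by apply: ereal_inf_lbound; exists a.
have : ((2 * u x - u a - e)%:E < ereal_sup (nbr_values x))%E.
  apply: lt_le_trans (lee_sup_addr_ge0 Lx ge_inf).
  by rewrite lte_fin ltrBlDr ltrDl.
by move=> /ereal_sup_gt [_ [z xz <-]]; rewrite lte_fin; exists z.
Qed.

End LaplacianNeighbours.

Section Descent.
Context {R : realType} {V : Type} {adj : V -> V -> Prop}.
Hypothesis adj_sym : forall x y, adj x y -> adj y x.
Variable w : V -> R.
Hypothesis w_ge0 : forall x, 0 <= w x.
Hypothesis descent : forall b a (e : R), adj b a -> 0 < e ->
  exists2 z, adj b z & w z < 2 * w b - w a + e.

Lemma descent_iter (c e : R) a b n : 0 < c -> 0 < e -> adj a b ->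
  c + e <= w a - w b -> n%:R * c <= w b.
Proof.
move=> c_gt0; elim: n e a b => [|n IHn] e a b e_gt0 ab drop_ab.
  by rewrite mul0r.
have e2_gt0 : 0 < e / 2 by lra.
have [z bz lt_z] := descent b a (e / 2) (adj_sym a b ab) e2_gt0.
(* Halving the slack keeps the next drop above [c]. *)
have drop_bz : c + e / 2 <= w b - w z by lra.
have := IHn (e / 2) b z e2_gt0 bz drop_bz.
rewrite -addn1 natrD mulrDl mul1r; lra.
Qed.

Lemma descent_adj_le a b : adj a b -> w a <= w b.
Proof.
move=> ab; rewrite leNgt; apply/negP => lt_ba.
pose c := (w a - w b) / 2.
have c_gt0 : 0 < c by rewrite /c; lra.
have drop_ab : c + c <= w a - w b by rewrite /c; lra.
have := descent_iter c c a b (Num.truncn (w b / c)).+1 c_gt0 c_gt0 ab drop_ab.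
have := truncnS_gt (w b / c); rewrite ltr_pdivrMr //; lra.
Qed.

Lemma descent_adj_eq a b : adj a b -> w a = w b.
Proof.
by move=> ab; apply/le_anti; rewrite !descent_adj_le //; apply: adj_sym.
Qed.

End Descent.

Theorem theorem3p7 (R : realType) (V : Type) (adj : V -> V -> Prop)
  (adj_sym : forall x y, adj x y -> adj y x)
  (adj_irr : forall x, ~ adj x x)
  (conn : graph_connected adj) :
  (forall u : V -> R, (forall x, 0 <= u x) ->
     (forall x, (infty_laplacian adj u x <= 0)%E) ->
     forall x y, u x = u y) /\
  (forall u : V -> R, (forall x, u x <= 0) ->
     (forall x, (0 <= infty_laplacian adj u x)%E) ->
     forall x y, u x = u y).
Proof.
split=> u u_sign Lu x y; apply: reachable_eq (conn x y).
- apply: (descent_adj_eq adj_sym _ u_sign) => b a e ba e_gt0.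
  exact: infty_laplacian_le0_nbr_lt.
- have opp_ge0 v : 0 <= - u v by rewrite oppr_ge0.
  suff opp_eq : forall a b, adj a b -> - u a = - u b.
    by move=> a b /opp_eq/oppr_inj.
  apply: (descent_adj_eq adj_sym _ opp_ge0) => b a e ba e_gt0.
  have [z bz gt_z] := infty_laplacian_ge0_nbr_gt b a e (Lu b) ba e_gt0.
  by exists z => //; lra.
Qed.
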